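(* Let $C$ be a program with total semantics and $e,e'$ expressions, and let $\Phi_{\langle C,e,e'\rangle}(f)(\sigma)=[\![e]\!](\sigma)\cdot f^\dagger([\![C]\!](\sigma))+[\![e']\!](\sigma)\cdot\eta(\sigma)$ for $f:\Sigma\to\mathcal W(\Sigma)$ and $\sigma\in\Sigma$. If $\Phi_{\langle C,e,e'\rangle}$ is a total function, then it is Scott continuous with respect to the pointwise order: $f_1\sqsubseteq^\bullet f_2$ iff $f_1(\sigma)\sqsubseteq f_2(\sigma)$ for all $\sigma\in\Sigma$.
   Context: $\mathcal A=\langle U,+,\cdot,\mathbf 0,\mathbf 1\rangle$ is a partial semiring ($+$ commutative, associative, possibly partial, unit $\mathbf 0$; $\cdot$ total, associative, unit $\mathbf 1$; two-sided distributivity; $\mathbf 0$ annihilates), naturally ordered ($u\le v$ iff $\exists w.\,u+w=v$ is a partial order), Scott continuous ($+$ and $\cdot$ preserve suprema of directed sets in each argument), with a top element. Infinite sums are suprema of finite partial sums. $\mathcal W(X)$: maps $m:X\to U$ with countable support $\{x:m(x)\ne\mathbf 0\}$ and defined mass, operations pointwise, $m_1\sqsubseteq m_2$ iff $m_1+m=m_2$ for some $m$. $\eta(x)(y)=\mathbf 1$ if $x=y$ else $\mathbf 0$; $f^\dagger(m)(y)=\sum_{x\in\mathrm{supp}(m)}m(x)\cdot f(x)(y)$. Programs over states $\Sigma$ are built from $\mathsf{skip}$, $;$, $+$, $\mathsf{assume}\ e$, iteration $C^{\langle e,e'\rangle}$ and atomic actions $a$ with $[\![a]\!]:\Sigma\to\mathcal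 W(\Sigma)$, with denotation $[\![C]\!]:\Sigma\to\mathcal W(\Sigma)$ (possibly partial because $+$ is partial). An expression $e$ is either a test $b$ (a Boolean combination of $\mathsf{true},\mathsf{false}$ and primitive tests $t\subseteq\Sigma$, with $[\![b]\!](\sigma)\in\{\mathbf 0,\mathbf 1\}$ and $[\![t]\!](\sigma)=\mathbf 1$ iff $\sigma\in t$) or a weight $u\in U$ with $[\![u]\!](\sigma)=u$. *)

From Stdlib Require Import List ClassicalEpsilon.
Import ListNotations.
Set Implicit Arguments.

Record psr := PSR {
  car :> Type;
  padd : car -> car -> option car;
  pmul : car -> car -> car;
  pzero : car;
  pone : car }.

Section PSR.
Variable A : psr.
Local Notation U := (car A).
Local Notation "u +? v" := (padd A u v) (at level 50).
Local Notation "u * v" := (pmul A u v).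

Definition obind {T S} (f : T -> option S) (o : option T) : option S :=
  match o with Some x => f x | None => None end.

Definition nle (u v : U) : Prop := exists w, u +? w = Some v.

Definition directed (D : U -> Prop) : Prop :=
  (exists d, D d) /\
  (forall d1 d2, D d1 -> D d2 -> exists d, D d /\ nle d1 d /\ nle d2 d).

Definition is_sup (P : U -> Prop) (s : U) : Prop :=
  (forall u, P u -> nle u s) /\ (forall b, (forall u, P u -> nle u b) -> nle s b).

Record psr_axioms : Prop := {
  padd_comm : forall u v, u +? v = v +? u;
  padd_assoc : forall u v w,
      obind (fun x => x +? w) (u +? v) = obind (fun y => u +? y) (v +? w);
  padd_0 : forall u, u +? pzero A = Some u;
  pmul_assoc : forall u v w, u * (v * w) = (u * v) * w;
  pmul_1l : forall u, pone A * u = u;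
  pmul_1r : forall u, u * pone A = u;
  distr_l : forall u v w s, v +? w = Some s -> (u * v) +? (u * w) = Some (u * s);
  distr_r : forall u v w s, v +? w = Some s -> (v * u) +? (w * u) = Some (s * u);
  pmul_0l : forall u, pzero A * u = pzero A;
  pmul_0r : forall u, u * pzero A = pzero A;
  (* natural order is a partial order (reflexive/transitive automatically) *)
  nle_antisym : forall u v, nle u v -> nle v u -> u = v;
  dcpo : forall D, directed D -> exists s, is_sup D s;
  (* Scott continuity of + in each argument (Kleene equality) *)
  padd_cont : forall u D s, directed D -> is_sup D s ->
      ((exists t, u +? s = Some t) <-> (forall d, D d -> exists t, u +? d = Some t)) /\
      (forall t, u +? s = Some t ->
         is_sup (fun v => exists d, D d /\ u +? d = Some v) t);
  pmul_cont_l : forall u D s, directed D -> is_sup D s ->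
      is_sup (fun v => exists d, D d /\ v = u * d) (u * s);
  pmul_cont_r : forall u D s, directed D -> is_sup D s ->
      is_sup (fun v => exists d, D d /\ v = d * u) (s * u);
  has_top : exists t, forall u, nle u t }.

Fixpoint lsum (l : list U) : option U :=
  match l with
  | [] => Some (pzero A)
  | u :: l' => obind (fun s => u +? s) (lsum l')
  end.

Definition finsum {I : Type} (F : I -> U) (S : I -> Prop) (v : U) : Prop :=
  exists l, NoDup l /\ (forall i, In i l -> S i) /\ lsum (map F l) = Some v.

Definition sum_defined {I : Type} (F : I -> U) (S : I -> Prop) : Prop :=
  forall l, NoDup l -> (forall i, In i l -> S i) -> exists v, lsum (map F l) = Some v.

Definition has_sum {I : Type} (F : I -> U) (S : I -> Prop) (s : U) : Prop :=
  sum_defined F S /\ is_sup (finsum F S) s.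

(** weighted multisets W(X): countable support, defined mass *)
Definition supp {X : Type} (m : X -> U) (x : X) : Prop := m x <> pzero A.

Definition countable_supp {X : Type} (m : X -> U) : Prop :=
  exists g : nat -> option X, forall x, supp m x -> exists n, g n = Some x.

Definition inW {X : Type} (m : X -> U) : Prop :=
  countable_supp m /\ exists s, has_sum m (supp m) s.

Definition wadd {X : Type} (m1 m2 m : X -> U) : Prop :=
  inW m /\ forall x, m1 x +? m2 x = Some (m x).

Definition wscale {X : Type} (u : U) (m : X -> U) : X -> U := fun x => u * m x.

Definition wle {X : Type} (m1 m2 : X -> U) : Prop :=
  exists m, inW m /\ wadd m1 m m2.

Definition eta {X : Type} (x : X) : X -> U :=
  fun y => if excluded_middle_informative (x = y) then pone A else pzero A.

Definition kext {X Y : Type} (f : X -> Y -> U) (m : X -> U) (r : Y -> U) : Prop :=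
  inW r /\ forall y, has_sum (fun x => m x * f x y) (supp m) (r y).

Definition isKer {S : Type} (f : S -> S -> U) : Prop := forall s, inW (f s).

Definition kle {S : Type} (f1 f2 : S -> S -> U) : Prop :=
  forall s, wle (f1 s) (f2 s).

Definition kdirected {S : Type} (D : (S -> S -> U) -> Prop) : Prop :=
  (exists f, D f) /\
  (forall f1 f2, D f1 -> D f2 -> exists f, D f /\ kle f1 f /\ kle f2 f).

Definition is_ksup {S : Type} (D : (S -> S -> U) -> Prop) (F : S -> S -> U) : Prop :=
  isKer F /\ (forall f, D f -> kle f F) /\
  (forall G, isKer G -> (forall f, D f -> kle f G) -> kle F G).

Inductive test (S : Type) :=
| tTrue | tFalse | tPrim (t : S -> bool)
| tNot (b : test S) | tAnd (b1 b2 : test S) | tOr (b1 b2 : test S).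

Fixpoint teval {S : Type} (b : test S) (s : S) : bool :=
  match b with
  | tTrue _ => true | tFalse _ => false | tPrim t => t s
  | tNot b => negb (teval b s)
  | tAnd b1 b2 => andb (teval b1 s) (teval b2 s)
  | tOr b1 b2 => orb (teval b1 s) (teval b2 s)
  end.

Inductive expr (S : Type) :=
| ETest (b : test S)
| EWeight (u : U).

Definition eeval {S : Type} (e : expr S) (s : S) : U :=
  match e with
  | ETest b => if teval b s then pone A else pzero A
  | EWeight _ u => u
  end.

Definition PhiR {S : Type} (c : S -> S -> U) (e e' : expr S)
    (f g : S -> S -> U) : Prop :=
  forall s, exists h, kext f (c s) h /\
    wadd (wscale (eeval e s) h) (wscale (eeval e' s) (eta s)) (g s).

End PSR.

Arguments tTrue {S}. Arguments tFalse {S}.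

(* Suprema of kernels are computed pointwise: the pointwise supremum of a
   directed family lies below the kernel supremum, so it is itself a kernel.
   Along a jointly directed family, Scott continuity of * and + turns each
   finite sum of suprema into the supremum of the finite sums, so the two
   suprema commute and f^dagger(m)(y) is continuous in f; the same continuity
   carries the supremum through e * _ + e' * eta. *)
From Stdlib Require Import List Permutation ClassicalEpsilon.
Import ListNotations.

Section PartialSemiring.
Variable A : psr.
Hypothesis HA : psr_axioms A.
Local Notation U := (car A).
Local Notation "u +? v" := (padd A u v) (at level 50).
Local Notation "u * v" := (pmul A u v).
Local Notation le := (nle A).

Lemma padd_0l u : pzero A +? u = Some u.
Proof. rewrite (padd_comm HA). apply (padd_0 HA). Qed.

Lemma nle_refl u : le u u.
Proof. exists (pzero A). apply (padd_0 HA). Qed.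

Lemma nle_trans u v w : le u v -> le v w -> le u w.
Proof.
  intros [a Ha] [b Hb].
  pose proof (padd_assoc HA u a b) as E. rewrite Ha in E. simpl in E.
  rewrite Hb in E. destruct (a +? b) as [ab|]; simpl in E; try discriminate.
  exists ab. auto.
Qed.

Lemma nle_0l u : le (pzero A) u.
Proof. exists u. apply padd_0l. Qed.

Lemma nle_0_eq u : le u (pzero A) -> u = pzero A.
Proof. intros H. apply (nle_antisym HA); auto. apply nle_0l. Qed.

Lemma padd_mono_l u u' v t' : le u u' -> u' +? v = Some t' ->
  exists t, u +? v = Some t /\ le t t'.
Proof.
  intros [w Hw] H.
  pose proof (padd_assoc HA u w v) as E1. rewrite Hw in E1. simpl in E1.
  rewrite H, (padd_comm HA w v) in E1.
  pose proof (padd_assoc HA u v w) as E2. rewrite <- E1 in E2.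
  destruct (u +? v) as [t|]; simpl in E2; try discriminate.
  exists t; split; auto. exists w; auto.
Qed.

Lemma padd_mono u u' v v' t' : le u u' -> le v v' -> u' +? v' = Some t' ->
  exists t, u +? v = Some t /\ le t t'.
Proof.
  intros Hu Hv H.
  destruct (padd_mono_l _ _ _ _ Hu H) as [t1 [E1 L1]].
  rewrite (padd_comm HA) in E1.
  destruct (padd_mono_l _ _ _ _ Hv E1) as [t [E L]].
  exists t; split. rewrite (padd_comm HA); auto. eapply nle_trans; eauto.
Qed.

Lemma pmul_mono_l u v v' : le v v' -> le (u * v) (u * v').
Proof. intros [w Hw]. exists (u * w). eapply (distr_l HA); eauto. Qed.

Lemma is_sup_unique P s1 s2 : is_sup A P s1 -> is_sup A P s2 -> s1 = s2.
Proof. intros [U1 L1] [U2 L2]. apply (nle_antisym HA); auto. Qed.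

Lemma is_sup_ext P Q s : (forall u, P u <-> Q u) -> is_sup A P s -> is_sup A Q s.
Proof.
  intros E [U1 L1]; split.
  - intros u Hu; apply U1, E; auto.
  - intros b Hb; apply L1; intros u Hu; apply Hb, E; auto.
Qed.

Lemma lsum_perm l l' : Permutation l l' -> lsum A l = lsum A l'.
Proof.
  induction 1; simpl; auto.
  - rewrite IHPermutation; auto.
  - destruct (lsum A l) as [t|]; simpl; auto.
    pose proof (padd_assoc HA y x t) as E1.
    pose proof (padd_assoc HA x y t) as E2.
    rewrite (padd_comm HA y x) in E1. congruence.
  - congruence.
Qed.

Lemma lsum_mono {I : Type} (F1 F2 : I -> U) l v2 :
  (forall i, In i l -> le (F1 i) (F2 i)) -> lsum A (map F2 l) = Some v2 ->
  exists v1, lsum A (map F1 l) = Some v1 /\ le v1 v2.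
Proof.
  revert v2; induction l as [|i l IH]; simpl; intros v2 Hle H.
  - exists (pzero A); split; auto. injection H as <-. apply nle_refl.
  - destruct (lsum A (map F2 l)) as [t2|]; simpl in H; try discriminate.
    destruct (IH t2) as [t1 [E1 L1]]; auto.
    rewrite E1; simpl. eapply padd_mono; eauto.
Qed.

Lemma lsum_incl {I : Type} (F : I -> U) l l' v' :
  NoDup l -> incl l l' -> lsum A (map F l') = Some v' ->
  exists v, lsum A (map F l) = Some v /\ le v v'.
Proof.
  intros Nl; revert l' v'; induction Nl as [|i l Hi Nl IH]; intros l' v' Inc H.
  - exists (pzero A); split; auto. apply nle_0l.
  - destruct (in_split i l' (Inc i (in_eq i l))) as [l1 [l2 ->]].
    rewrite (lsum_perm _ _ (Permutation_map F (Permutation_sym (Permutation_middle l1 l2 i)))) in H.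
    simpl in H.
    destruct (lsum A (map F (l1 ++ l2))) as [w'|] eqn:Ew; simpl in H; try discriminate.
    destruct (IH (l1 ++ l2) w') as [w [Ew' Lw]]; auto.
    { intros x Hx. pose proof (Inc x (in_cons i x l Hx)) as Hx'.
      apply in_app_or in Hx'; apply in_or_app.
      destruct Hx' as [|[->|]]; tauto. }
    simpl. rewrite Ew'. simpl. eapply padd_mono; eauto using nle_refl.
Qed.

Lemma finsum_directed {I : Type} (F : I -> U) (S : I -> Prop) :
  sum_defined A F S -> directed A (finsum A F S).
Proof.
  intros Hd. split.
  - exists (pzero A), []. repeat split; [constructor | contradiction].
  - intros v1 v2 [l1 [N1 [S1 E1]]] [l2 [N2 [S2 E2]]].
    pose (dec := fun x y : I => excluded_middle_informative (x = y)).
    set (l := nodup dec (l1 ++ l2)).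
    assert (Nl : NoDup l) by apply NoDup_nodup.
    assert (Hl : forall i, In i l <-> In i l1 \/ In i l2).
    { intros i. unfold l. rewrite nodup_In. split; [apply in_app_or | apply in_or_app]. }
    destruct (Hd l Nl) as [v Ev]. { intros i Hi. apply Hl in Hi as [|]; auto. }
    exists v. split; [exists l; repeat split; auto; intros i Hi; apply Hl in Hi as [|]; auto|].
    split.
    + destruct (lsum_incl F l1 l v N1) as [w [Ew Lw]]; auto.
      { intros i Hi; apply Hl; auto. }
      congruence.
    + destruct (lsum_incl F l2 l v N2) as [w [Ew Lw]]; auto.
      { intros i Hi; apply Hl; auto. }
      congruence.
Qed.


Lemma inW_le {X : Type} (m m' : X -> U) :
  (forall x, le (m x) (m' x)) -> inW A m' -> inW A m.
Proof.
  intros Hle [[g Hg] [s' [Hd' _]]].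
  assert (Hs : forall x, supp A m x -> supp A m' x).
  { intros x Hx E. apply Hx, nle_0_eq. rewrite <- E; auto. }
  split.
  - exists g. intros x Hx. apply Hg, Hs; auto.
  - assert (Hd : sum_defined A m (supp A m)).
    { intros l N Hl. destruct (Hd' l N) as [v Ev]; auto.
      destruct (lsum_mono m m' l v) as [v1 [E1 _]]; eauto. }
    destruct (dcpo HA (finsum_directed m (supp A m) Hd)) as [s Hs'].
    exists s. split; auto.
Qed.

Lemma wle_le {X : Type} (m1 m2 : X -> U) : wle A m1 m2 -> forall x, le (m1 x) (m2 x).
Proof. intros [m [_ [_ H]]] x. exists (m x); auto. Qed.

Lemma le_wle {X : Type} (m1 m2 : X -> U) :
  (forall x, le (m1 x) (m2 x)) -> inW A m2 -> wle A m1 m2.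
Proof.
  intros Hle HW.
  pose (m := fun x => proj1_sig (constructive_indefinite_description _ (Hle x))).
  assert (Hm : forall x, m1 x +? m x = Some (m2 x)).
  { intros x. unfold m. destruct constructive_indefinite_description; auto. }
  assert (HmW : inW A m).
  { apply (inW_le m m2); auto. intros x. exists (m1 x). rewrite (padd_comm HA); auto. }
  exists m. split; [exact HmW | split; auto].
Qed.

Lemma kext_unique {X Y : Type} (f : X -> Y -> U) m h1 h2 :
  kext A f m h1 -> kext A f m h2 -> forall y, h1 y = h2 y.
Proof.
  intros [_ H1] [_ H2] y. destruct (H1 y) as [_ S1], (H2 y) as [_ S2].
  eapply is_sup_unique; eauto.
Qed.

Lemma kext_mono {X Y : Type} (f1 f2 : X -> Y -> U) m h1 h2 :
  (forall x y, le (f1 x y) (f2 x y)) -> kext A f1 m h1 -> kext A f2 m h2 ->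
  forall y, le (h1 y) (h2 y).
Proof.
  intros Hle [_ H1] [_ H2] y. destruct (H1 y) as [_ [_ L1]], (H2 y) as [D2 [U2 _]].
  apply L1. intros v [l [N [Sl E]]].
  destruct (D2 l N Sl) as [v2 E2].
  destruct (lsum_mono (fun x => m x * f1 x y) (fun x => m x * f2 x y) l v2)
    as [v1 [E1 L]]; auto using pmul_mono_l.
  replace v with v1 by congruence. eapply nle_trans; eauto.
  apply U2. exists l; auto.
Qed.

Lemma PhiR_mono {S : Type} (c : S -> S -> U) e e' f1 f2 g1 g2 :
  kle A f1 f2 -> PhiR c e e' f1 g1 -> PhiR c e e' f2 g2 -> kle A g1 g2.
Proof.
  intros Hf P1 P2 s.
  destruct (P1 s) as [h1 [K1 [_ W1]]], (P2 s) as [h2 [K2 [W2 E2]]].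
  apply le_wle; auto. intros x. specialize (W1 x); specialize (E2 x). unfold wscale in *.
  assert (Hh : le (h1 x) (h2 x)).
  { apply (kext_mono f1 f2 (c s) h1 h2); auto. intros y z; apply wle_le; auto. }
  destruct (padd_mono _ _ _ _ _ (pmul_mono_l (eeval e s) _ _ Hh) (nle_refl _) E2)
    as [t [Et Lt]].
  congruence.
Qed.


Section Nets.
Context {I : Type} (R : I -> I -> Prop) (D : I -> Prop).
Hypothesis D_directed :
  (exists i, D i) /\ (forall i j, D i -> D j -> exists k, D k /\ R i k /\ R j k).

(* A net is given as a relation so that partially defined values, such as
   finite sums, can be indexed by [D]. *)
Definition net_vals (N : I -> U -> Prop) (v : U) : Prop := exists i, D i /\ N i v.

Definition net_total (N : I -> U -> Prop) : Prop := forall i, D i -> exists v, N i v.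

Definition net_mono (N : I -> U -> Prop) : Prop :=
  forall i j v w, R i j -> N i v -> N j w -> le v w.

Lemma net_directed N : net_total N -> net_mono N -> directed A (net_vals N).
Proof.
  destruct D_directed as [[i0 Di0] HD]. intros Ht Hm. split.
  - destruct (Ht i0 Di0) as [v Hv]. exists v, i0; auto.
  - intros v1 v2 [i [Di Hi]] [j [Dj Hj]].
    destruct (HD i j Di Dj) as [k [Dk [Rik Rjk]]].
    destruct (Ht k Dk) as [w Hw].
    exists w. split; [exists k; auto | split; [apply (Hm i k) | apply (Hm j k)]; auto].
Qed.

Lemma net_sup_const u : is_sup A (net_vals (fun _ v => v = u)) u.
Proof.
  destruct D_directed as [[i0 Di0] _]. split.
  - intros v [i [_ ->]]. apply nle_refl.
  - intros b Hb. apply Hb. exists i0; auto.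
Qed.

Lemma net_sup_mul u N s : net_total N -> net_mono N ->
  is_sup A (net_vals N) s ->
  is_sup A (net_vals (fun i v => exists w, N i w /\ v = u * w)) (u * s).
Proof.
  intros Ht Hm Hs.
  apply (is_sup_ext (fun v => exists w, net_vals N w /\ v = u * w)).
  - intros v. split.
    + intros [w [[i [Di Hi]] ->]]. exists i; eauto.
    + intros [i [Di [w [Hi ->]]]]. exists w; split; [exists i|]; auto.
  - apply (pmul_cont_l HA); auto. apply net_directed; auto.
Qed.

(* Scott continuity exchanges [+] with each supremum separately; joint
   directedness then bounds [v1 + v2] by the sum net at a common upper index. *)
Lemma net_sup_add N1 N2 s1 s2 t :
  net_total N1 -> net_total N2 -> net_mono N1 -> net_mono N2 ->
  is_sup A (net_vals N1) s1 -> is_sup A (net_vals N2) s2 -> s1 +? s2 = Some t ->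
  is_sup A (net_vals (fun i v => exists v1 v2, N1 i v1 /\ N2 i v2 /\ v1 +? v2 = Some v)) t.
Proof.
  intros T1 T2 M1 M2 [U1 L1] [U2 L2] Ht. split.
  - intros v [i [Di [v1 [v2 [H1 [H2 Hv]]]]]].
    destruct (padd_mono v1 s1 v2 s2 t) as [t' [Et' Lt']];
      [apply U1; exists i | apply U2; exists i | |]; auto.
    congruence.
  - intros b Hb.
    destruct (padd_cont HA s1 (net_directed N2 T2 M2) (conj U2 L2)) as [_ Hs1].
    apply (Hs1 t Ht). intros v [v2 [[i [Di H2]] Hv]].
    rewrite (padd_comm HA) in Hv.
    destruct (padd_cont HA v2 (net_directed N1 T1 M1) (conj U1 L1)) as [_ Hv2].
    apply (Hv2 v Hv). intros w [v1 [[j [Dj H1]] Hw]].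
    destruct (proj2 D_directed i j Di Dj) as [k [Dk [Rik Rjk]]].
    destruct (T1 k Dk) as [w1 Hw1], (T2 k Dk) as [w2 Hw2].
    destruct (padd_mono w1 s1 w2 s2 t) as [t' [Et' _]];
      [apply U1; exists k | apply U2; exists k | |]; auto.
    rewrite (padd_comm HA) in Et'.
    destruct (padd_mono v2 w2 v1 w1 t') as [w' [Ew' Lw']]; eauto.
    eapply nle_trans; [|apply Hb; exists k; split; [|exists w1, w2; rewrite (padd_comm HA)]; eauto].
    congruence.
Qed.

Lemma net_sup_lsum {J : Type} (G : J -> I -> U) (g : J -> U) l t :
  (forall j, net_mono (fun i v => v = G j i)) ->
  (forall j, is_sup A (net_vals (fun i v => v = G j i)) (g j)) ->
  lsum A (map g l) = Some t ->
  is_sup A (net_vals (fun i v => lsum A (map (fun j => G j i) l) = Some v)) t.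
Proof.
  intros HG Hg. revert t; induction l as [|j l IH]; simpl; intros t Ht.
  - injection Ht as <-. eapply is_sup_ext; [|apply net_sup_const].
    intros v; split; intros [i [Di Hi]]; exists i; split; congruence.
  - destruct (lsum A (map g l)) as [s|] eqn:Es; simpl in Ht; try discriminate.
    eapply is_sup_ext; [|apply (net_sup_add (fun i v => v = G j i)
      (fun i v => lsum A (map (fun j => G j i) l) = Some v) (g j) s t); auto].
    + intros v; split.
      * intros [i [Di [v1 [v2 [-> [Hv2 Hv]]]]]]. exists i. rewrite Hv2; auto.
      * intros [i [Di Hv]]. exists i. split; auto.
        destruct (lsum A (map (fun j => G j i) l)) as [v2|]; try discriminate.
        exists (G j i), v2; auto.
    + intros i _; eauto.
    + intros i Di.
      destruct (lsum_mono (fun j => G j i) g l s) as [v [Ev _]]; eauto.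
      intros j' _. apply (Hg j'). exists i; auto.
    + intros i i' v w Rii' Hv Hw.
      destruct (lsum_mono (fun j => G j i) (fun j => G j i') l w) as [v' [Ev' Lv']];
        [intros; eapply HG; eauto | auto |].
      congruence.
Qed.

End Nets.

Section Kernels.
Variable S : Type.
Variable D : (S -> S -> U) -> Prop.
Hypothesis D_directed : kdirected A D.

Lemma ksup_pointwise F : is_ksup A D F ->
  forall y x, is_sup A (net_vals D (fun f v => v = f y x)) (F y x).
Proof.
  intros [HFk [HFub HFleast]].
  assert (Hsup : forall y x, exists v, is_sup A (net_vals D (fun f v => v = f y x)) v).
  { intros y x. apply (dcpo HA), (net_directed _ _ D_directed); [intros f _; eauto|].
    intros f g v w Hfg -> ->. apply wle_le, Hfg. }
  (* The pointwise supremum lies below [F], hence is a kernel, hence above [F]. *)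
  pose (P := fun y x => proj1_sig (constructive_indefinite_description _ (Hsup y x))).
  assert (HP : forall y x, is_sup A (net_vals D (fun f v => v = f y x)) (P y x)).
  { intros y x. unfold P. destruct constructive_indefinite_description; auto. }
  assert (HPF : forall y x, le (P y x) (F y x)).
  { intros y x. apply (HP y x). intros v [f [Hf ->]]. apply wle_le, HFub; auto. }
  assert (HPk : isKer A P) by (intros y; apply (inW_le (P y) (F y)); auto).
  assert (HFP : kle A F P).
  { apply HFleast; auto. intros f Hf y. apply le_wle; auto.
    intros x. apply (HP y x). exists f; auto. }
  intros y x. replace (F y x) with (P y x); auto.
  apply (nle_antisym HA); auto. apply wle_le, HFP.
Qed.

Lemma kext_net_sup F m hF : is_ksup A D F -> kext A F m hF ->
  (forall f, D f -> exists h, kext A f m h) ->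
  forall y, is_sup A (net_vals D (fun f v => exists h, kext A f m h /\ v = h y)) (hF y).
Proof.
  intros HF KF Hex y.
  pose proof (ksup_pointwise F HF) as HFpt.
  split.
  - intros v [f [Hf [h [Kh ->]]]]. apply (kext_mono f F m h hF); auto.
    intros x z. apply (HFpt x z). exists f; auto.
  - intros b Hb. destruct KF as [_ KF]. destruct (KF y) as [_ [_ Hleast]]. apply Hleast.
    intros t [l [Nl [Sl Et]]].
    apply (net_sup_lsum _ _ D_directed (fun x f => m x * f x y) (fun x => m x * F x y) l t);
      auto.
    + intros x f g v w Hfg -> ->. apply pmul_mono_l, wle_le, Hfg.
    + intros x. eapply is_sup_ext;
        [|apply (net_sup_mul _ _ D_directed (m x) (fun f v => v = f x y)), HFpt].
      * intros v; split; intros [f [Hf Hv]]; exists f; split; auto.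
        -- destruct Hv as [w [-> ->]]; auto.
        -- eauto.
      * intros f _; eauto.
      * intros f g v w Hfg -> ->. apply wle_le, Hfg.
    + intros v [f [Hf Ev]]. destruct (Hex f Hf) as [h Kh].
      apply nle_trans with (h y); [|apply Hb; exists f; eauto].
      destruct Kh as [_ Kh]. destruct (Kh y) as [_ [Hub _]]. apply Hub. exists l; auto.
Qed.

Lemma PhiR_net_sup (c : S -> S -> U) e e' F G : is_ksup A D F -> PhiR c e e' F G ->
  (forall f, D f -> exists g, PhiR c e e' f g) ->
  forall s x, is_sup A (net_vals D (fun f v => exists g, PhiR c e e' f g /\ v = g s x)) (G s x).
Proof.
  intros HF PG Htot s x.
  destruct (PG s) as [hF [KF [_ WF]]]. specialize (WF x). unfold wscale in WF.
  assert (Hex : forall f, D f -> exists h, kext A f (c s) h).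
  { intros f Hf. destruct (Htot f Hf) as [g Pg]. destruct (Pg s) as [h [Kh _]]; eauto. }
  pose (N := fun f v => exists h, kext A f (c s) h /\ v = h x).
  assert (Ntot : net_total D N).
  { intros f Hf. destruct (Hex f Hf) as [h Kh]. exists (h x), h; auto. }
  assert (Nmono : net_mono (kle A) N).
  { intros f1 f2 v1 v2 Hf [h1 [K1 ->]] [h2 [K2 ->]].
    apply (kext_mono f1 f2 (c s) h1 h2); auto. intros y z; apply wle_le, Hf. }
  pose (Ne := fun f v => exists w, N f w /\ v = eeval e s * w).
  pose (Ne' := fun (f : S -> S -> U) v => v = eeval e' s * eta A s x).
  assert (Hsum : is_sup A (net_vals D (fun f v =>
            exists v1 v2, Ne f v1 /\ Ne' f v2 /\ v1 +? v2 = Some v)) (G s x)).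
  { apply (net_sup_add _ _ D_directed Ne Ne' (eeval e s * hF x) (eeval e' s * eta A s x)); auto.
    - intros f Hf. destruct (Ntot f Hf) as [w Hw]. exists (eeval e s * w), w; auto.
    - intros f _. exists (eeval e' s * eta A s x); reflexivity.
    - intros f1 f2 v1 v2 Hf [w1 [H1 ->]] [w2 [H2 ->]].
      apply pmul_mono_l. eapply Nmono; eauto.
    - intros f1 f2 v1 v2 _ -> ->. apply nle_refl.
    - apply (net_sup_mul _ _ D_directed); auto. apply (kext_net_sup F (c s) hF HF KF Hex x).
    - apply (net_sup_const _ _ D_directed). }
  eapply is_sup_ext; [|exact Hsum]. intros v; split.
  - intros [f [Hf [v1 [v2 [[w [[h [Kh ->]] ->]] [-> Hv]]]]]].
    destruct (Htot f Hf) as [g Pg]. exists f; split; auto. exists g; split; auto.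
    destruct (Pg s) as [h' [Kh' [_ Wg]]]. specialize (Wg x). unfold wscale in Wg.
    rewrite (kext_unique f (c s) h h' Kh Kh' x) in Hv. congruence.
  - intros [f [Hf [g [Pg ->]]]]. destruct (Pg s) as [h [Kh [_ Wg]]].
    exists f; split; auto. exists (eeval e s * h x), (eeval e' s * eta A s x).
    split; [exists (h x); split; [exists h|]; auto | split; [reflexivity | apply (Wg x)]].
Qed.

End Kernels.

End PartialSemiring.

Theorem lemmaA5 (A : psr) (HA : psr_axioms A) (Sigma : Type)
    (c : Sigma -> Sigma -> car A) (Hc : isKer A c) (e e' : expr A Sigma)
    (Htot : forall f, isKer A f -> exists g, PhiR c e e' f g) :
  (forall f1 f2 g1 g2, isKer A f1 -> isKer A f2 -> kle A f1 f2 ->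
      PhiR c e e' f1 g1 -> PhiR c e e' f2 g2 -> kle A g1 g2) /\
  (forall (D : (Sigma -> Sigma -> car A) -> Prop) F G,
      (forall f, D f -> isKer A f) -> kdirected A D -> is_ksup A D F ->
      PhiR c e e' F G ->
      is_ksup A (fun g => exists f, D f /\ PhiR c e e' f g) G).
Proof.
  split.
  - intros f1 f2 g1 g2 _ _ Hf P1 P2. eapply PhiR_mono; eauto.
  - intros D F G HDk HDd HF PG. split; [|split].
    + intros s. destruct (PG s) as [h [_ [HW _]]]. exact HW.
    + intros g [f [Hf Pf]]. destruct HF as [_ [HfF _]]. eapply PhiR_mono; eauto.
    + intros H HH Hub s. apply (le_wle A HA); [|apply HH].
      intros x. apply (PhiR_net_sup A HA _ D HDd c e e' F G HF PG); [intros f Hf; apply Htot, HDk, Hf|].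
      intros v [f [Hf [g [Pg ->]]]]. apply (wle_le A). apply Hub. eauto.
Qed.
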